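(* When all requests are scheduled by a Byzantine adversary, the algorithm's total RB cost and its total latency due to the $\mathcal{Q}$ good queries are each $$O\Big(\big(\mathcal{I}+\mathcal{Q}+\sqrt{(\mathcal{I}+\mathcal{Q})\,\mathcal{B}}\big)\,\ell_M^2\Big),$$ where this bound includes the cost of the good insertions.
   Context: Model. A hash table has $t$ indices with chaining. The objects at an index form a list, new objects are appended at the tail, and $L_i$ denotes the current number of objects in the list at index $i$. The depth of an object is its position counted from the head of its list (the head has depth $1$). Algorithm \textsc{Depth Charge}: - Inserting at index $i$ costs the inserter an RB (resource-burning) cost of $L_i+1$ and has latency $1$. - Querying a present object at depth $\Delta$ costs $\Delta$, has latency $\Delta$, and then moves the object to the head of its list. - Querying an absent object costs $L_i$. Good objects (inserted by clients) go to uniformly random indices; clients query only good objects. The adversary inserts bad objects at indices of its choice and may query any object. Notation. $\mathcal{I}$ is the number of good insertions. $\mathcal{Q}$ is the number of good queries for objects present in the table. $\mathcal{B}$ is the adversary's total RB cost. $\ell_M$ is the maximum, over indices, of the maximum number of good objects ever present in that index. *)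

From mathcomp Require Import all_boot.
From Stdlib Require Import Reals.

Set Implicit Arguments.
Unset Strict Implicit.
Unset Printing Implicit Defensive.

(* An object is a pair (identifier, is_good).  Identifiers are fresh:
   the object inserted at step n of the execution gets identifier n. *)
Definition obj := (nat * bool)%type.

(* A hash table: index |-> list at that index (head of the list first). *)
Definition table := nat -> seq obj.

Definition empty_table : table := fun _ => [::].

Definition upd (T : table) (i : nat) (s : seq obj) : table :=
  fun j => if j == i then s else T j.

(* GIns i : a client inserts a new good object at index i
   (i is the uniformly random index; here it is arbitrary).
   GQry i x : a client queries object x, which hashes to index i.
   BQry i x : the adversary queries object x (present or absent), hashing
   to index i. *)
Inductive op :=
| GIns of nat
| BIns of nat
| GQry of nat & nat
| BQry of nat & nat.

Definition is_good_op (o : op) : bool :=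
  match o with GIns _ | GQry _ _ => true | _ => false end.

Definition is_gins (o : op) : bool := if o is GIns _ then true else false.
Definition is_gqry (o : op) : bool := if o is GQry _ _ then true else false.

(* 0-based position of object x in list s (size s if absent);
   the depth of a present object is this position + 1. *)
Definition pos (s : seq obj) (x : nat) : nat := find (fun o : obj => o.1 == x) s.

Definition move_to_front (s : seq obj) (k : nat) : seq obj :=
  nth (0, false) s k :: (take k s ++ drop k.+1 s).

Definition next_table (T : table) (n : nat) (o : op) : table :=
  match o with
  | GIns i => upd T i (rcons (T i) (n, true))
  | BIns i => upd T i (rcons (T i) (n, false))
  | GQry i x | BQry i x =>
      let k := pos (T i) x in
      if k < size (T i) then upd T i (move_to_front (T i) k) else T
  end.

Definition rb_cost (T : table) (o : op) : nat :=
  match o with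
  | GIns i | BIns i => (size (T i)).+1
  | GQry i x | BQry i x =>
      let k := pos (T i) x in
      if k < size (T i) then k.+1 else size (T i)
  end.

Definition latency (T : table) (o : op) : nat :=
  match o with
  | GIns _ | BIns _ => 1
  | _ => rb_cost T o
  end.

Fixpoint exec (T : table) (n : nat) (tr : seq op) : seq (table * op) :=
  match tr with
  | [::] => [::]
  | o :: tr' => (T, o) :: exec (next_table T n o) n.+1 tr'
  end.

Fixpoint states (T : table) (n : nat) (tr : seq op) : seq table :=
  match tr with
  | [::] => [:: T]
  | o :: tr' => T :: states (next_table T n o) n.+1 tr'
  end.

Definition valid_req (t : nat) (T : table) (o : op) : bool :=
  match o with
  | GIns i | BIns i => i < t
  | GQry i x => (i < t) && ((x, true) \in T i)
  | BQry i _ => i < t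
  end.

Definition valid (t : nat) (tr : seq op) : bool :=
  all (fun p : table * op => valid_req t p.1 p.2) (exec empty_table 0 tr).

Definition n_good_ins (tr : seq op) : nat := count is_gins tr.
Definition n_good_qry (tr : seq op) : nat := count is_gqry tr.

Definition adv_cost (tr : seq op) : nat :=
  \sum_(p <- exec empty_table 0 tr | ~~ is_good_op p.2) rb_cost p.1 p.2.

Definition good_cost (tr : seq op) : nat :=
  \sum_(p <- exec empty_table 0 tr | is_good_op p.2) rb_cost p.1 p.2.

Definition good_qry_latency (tr : seq op) : nat :=
  \sum_(p <- exec empty_table 0 tr | is_gqry p.2) latency p.1 p.2.

Definition ell_M (t : nat) (tr : seq op) : nat :=
  \max_(i < t) \max_(T <- states empty_table 0 tr) count snd (T i).

Definition dc_bound (t : nat) (tr : seq op) : R :=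
  let IQ := INR (n_good_ins tr + n_good_qry tr) in
  (IQ + sqrt (IQ * INR (adv_cost tr))) * INR (ell_M t tr) ^ 2.

(* Amortized analysis with L = ell_M and the potential
     sum over indices i of  [ sum over good x in list i of (#bad objects ahead of x)^2
                              + 2 (L - #good_i) (#bad_i)^2 ].
   A good request with a bad objects ahead of its target costs at most L + a and
   lowers the potential by a^2: a query moves its object to the head, an insertion at
   the tail uses up one unit of the slack L - #good_i.  A bad request of cost c raises
   the potential by at most 4 L c.  Hence the good requests cost at most
   L (I + Q) + sum_k a_k with sum_k a_k^2 <= 4 L B, and Cauchy-Schwarz bounds sum_k a_k
   by 2 sqrt ((I + Q) L B). *)

From Pilot Require Import Defs.
From mathcomp Require Import all_boot zify.
From Stdlib Require Import Reals Lra Psatz.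

Set Implicit Arguments.
Unset Strict Implicit.
Unset Printing Implicit Defensive.

Definition ngood (s : seq obj) : nat := count snd s.
Definition nbad (s : seq obj) : nat := count (predC snd) s.

Lemma ngood_nbad s : ngood s + nbad s = size s.
Proof. exact: count_predC. Qed.

Lemma ngood_cat s1 s2 : ngood (s1 ++ s2) = ngood s1 + ngood s2.
Proof. exact: count_cat. Qed.

Lemma nbad_cat s1 s2 : nbad (s1 ++ s2) = nbad s1 + nbad s2.
Proof. exact: count_cat. Qed.

Fixpoint bad_ahead_sq (s : seq obj) (c : nat) : nat :=
  match s with
  | [::] => 0
  | o :: s' => if o.2 then c * c + bad_ahead_sq s' c else bad_ahead_sq s' c.+1
  end.

Lemma bad_ahead_sq_cat s1 s2 c :
  bad_ahead_sq (s1 ++ s2) c = bad_ahead_sq s1 c + bad_ahead_sq s2 (c + nbad s1).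
Proof.
elim: s1 c => [|o s1 IH] c /=; first by rewrite addn0.
by rewrite /nbad /=; case: o.2; rewrite IH /= ?addnA // -addn1 addnAC.
Qed.

Lemma bad_ahead_sq_S s c :
  bad_ahead_sq s c.+1 <= bad_ahead_sq s c + ngood s * (2 * (c + nbad s) + 1).
Proof.
elim: s c => [|o s IH] c //=.
rewrite /ngood /nbad /=; case: o.2 => /=.
- have := IH c; rewrite /ngood /nbad; nia.
- have := IH c.+1; rewrite /ngood /nbad; nia.
Qed.

Definition potential (L : nat) (s : seq obj) : nat :=
  bad_ahead_sq s 0 + 2 * (L - ngood s) * (nbad s * nbad s).

Lemma potential_rcons_good L s (y : obj) : y.2 -> ngood s < L ->
  potential L (rcons s y) + nbad s * nbad s = potential L s.
Proof.
move=> y_good; rewrite /potential -cats1 bad_ahead_sq_cat ngood_cat nbad_cat.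
rewrite /ngood /nbad /= y_good -/(ngood s) -/(nbad s) add0n !addn0.
set g := ngood s; set b := nbad s => g_lt.
have -> : L - (g + 1) = (L - g) - 1 by lia.
have : 1 <= L - g by lia.
set m := L - g; nia.
Qed.

Lemma potential_rcons_bad L s (y : obj) : ~~ y.2 -> ngood s <= L ->
  potential L (rcons s y) <= potential L s + 4 * L * (size s).+1.
Proof.
move=> /negbTE y_bad; rewrite /potential -cats1 bad_ahead_sq_cat ngood_cat nbad_cat.
rewrite /ngood /nbad /= y_bad -/(ngood s) -/(nbad s) !addn0 -ngood_nbad.
set g := ngood s; set b := nbad s => g_le.
have : L - g <= L by lia.
set m := L - g; nia.
Qed.

Lemma count_to_front (A : Type) (a : pred A) p y q :
  count a (y :: p ++ q) = count a (p ++ y :: q).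
Proof. by rewrite /= !count_cat /= addnCA. Qed.

Lemma ngood_to_front p (y : obj) q : ngood (y :: p ++ q) = ngood (p ++ y :: q).
Proof. exact: count_to_front. Qed.

Lemma nbad_to_front p (y : obj) q : nbad (y :: p ++ q) = nbad (p ++ y :: q).
Proof. exact: count_to_front. Qed.

Lemma potential_to_front_good L p (y : obj) q : y.2 ->
  potential L (y :: p ++ q) + nbad p * nbad p = potential L (p ++ y :: q).
Proof.
move=> y_good; rewrite /potential ngood_to_front nbad_to_front.
by rewrite /= y_good !bad_ahead_sq_cat /= y_good add0n; lia.
Qed.

Lemma potential_to_front_bad L p (y : obj) q : ~~ y.2 -> ngood p <= L ->
  potential L (y :: p ++ q) <= potential L (p ++ y :: q) + 4 * L * (size p).+1.
Proof.
move=> /negbTE y_bad g_le; rewrite /potential ngood_to_front nbad_to_front.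
rewrite /= y_bad !bad_ahead_sq_cat /= y_bad !add0n add1n.
have := bad_ahead_sq_S p 0; rewrite add0n -ngood_nbad.
move: g_le; set g := ngood p; set b := nbad p; nia.
Qed.

Definition table_potential (L t : nat) (T : table) : nat :=
  \sum_(i < t) potential L (T i).

Lemma table_potential_upd L t T i s : i < t ->
  table_potential L t (upd T i s) + potential L (T i) = table_potential L t T + potential L s.
Proof.
move=> it; rewrite /table_potential.
rewrite [in LHS](bigD1 (Ordinal it)) // [in RHS](bigD1 (Ordinal it)) //= {1}/upd eqxx.
rewrite (eq_bigr (fun j : 'I_t => potential L (T j))); first lia.
by move=> j /= ji; rewrite /upd ifF //; apply: contraNF ji => /eqP ji; apply/eqP/val_inj.
Qed.

(* Guarantees that the first object with identifier x met by a client query is the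
   queried good object. *)
Definition fresh_ids (T : table) (n : nat) : Prop :=
  forall i, uniq (map fst (T i)) && all (fun o : obj => o.1 < n) (T i).

Lemma cat_take_nth_drop (A : Type) (x0 : A) (s : seq A) k : k < size s ->
  take k s ++ nth x0 s k :: drop k.+1 s = s.
Proof. by move=> ks; rewrite -drop_nth // cat_take_drop. Qed.

Lemma perm_move_to_front s k : k < size s -> perm_eq (move_to_front s k) s.
Proof.
move=> ks; rewrite -{2}(cat_take_nth_drop (0, false) ks).
by rewrite /move_to_front -cat1s perm_catCA.
Qed.

Lemma fresh_ids_next T n o : fresh_ids T n -> fresh_ids (next_table T n o) n.+1.
Proof.
move=> fT.
have fT' : fresh_ids T n.+1.
  move=> j; case/andP: (fT j) => -> /= lt_n.
  by apply: sub_all lt_n => y /= /ltnW.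
have upd_fresh i s : uniq (map fst s) && all (fun y : obj => y.1 < n.+1) s ->
    fresh_ids (upd T i s) n.+1.
  by move=> fs j; rewrite /upd; case: ifP.
have ins_fresh i b : fresh_ids (upd T i (rcons (T i) (n, b))) n.+1.
  apply: upd_fresh; case/andP: (fT i) => uT lt_n.
  rewrite map_rcons rcons_uniq uT all_rcons /= ltnSn andbT.
  apply/andP; split; last by apply: sub_all lt_n => y /= /ltnW.
  by apply/mapP => -[y /(allP lt_n) /= y_lt ny]; rewrite ny ltnn in y_lt.
case: o => [i|i|i x|i x] //=; case: ifP => // ks; apply: upd_fresh;
  have pT := perm_move_to_front ks;
  by rewrite (perm_uniq (perm_map fst pT)) (perm_all _ pT); case/andP: (fT' i).
Qed.

Lemma move_to_front_split (s : seq obj) k : k < size s ->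
  exists p y q, [/\ s = p ++ y :: q, move_to_front s k = y :: p ++ q,
                   size p = k & nth (0, false) s k = y].
Proof.
move=> ks; exists (take k s), (nth (0, false) s k), (drop k.+1 s).
by rewrite cat_take_nth_drop // size_take ks.
Qed.

Lemma potential_move_to_front_good L s k : k < size s -> (nth (0, false) s k).2 ->
  ngood s <= L ->
  exists a, potential L (move_to_front s k) + a * a = potential L s /\ k.+1 <= L + a.
Proof.
move=> /move_to_front_split [p [y [q [-> -> <- ->]]]] y_good.
rewrite ngood_cat /= y_good -ngood_nbad => ngood_le.
by exists (nbad p); split; [exact: potential_to_front_good | lia].
Qed.

Lemma potential_move_to_front L s k : k < size s -> ngood s <= L ->
  potential L (move_to_front s k) <= potential L s + 4 * L * k.+1.
Proof.
move=> ks ngood_le; case y_good: (nth (0, false) s k).2.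
  by have [a [<- _]] := potential_move_to_front_good ks y_good ngood_le; lia.
move: ngood_le y_good; have [p [y [q [-> -> <- ->]]]] := move_to_front_split ks.
rewrite ngood_cat => ngood_le y_bad.
by apply: potential_to_front_bad; [rewrite y_bad | lia].
Qed.

Lemma uniq_map_inj (T1 T2 : eqType) (f : T1 -> T2) (s : seq T1) :
  uniq (map f s) -> {in s &, injective f}.
Proof.
elim: s => [|a s IH] //= /andP [fa_notin /IH f_inj] y z.
rewrite !in_cons => /predU1P [-> | ys] /predU1P [-> | zs] // fyz.
- by move: fa_notin; rewrite fyz map_f.
- by move: fa_notin; rewrite -fyz map_f.
- exact: f_inj.
Qed.

Lemma nth_pos_of_mem (s : seq obj) (y : obj) : uniq (map fst s) -> y \in s ->
  Defs.pos s y.1 < size s /\ nth (0, false) s (Defs.pos s y.1) = y.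
Proof.
move=> s_uniq ys; have y_has : has (fun o : obj => o.1 == y.1) s by apply/hasP; exists y.
have pos_lt : Defs.pos s y.1 < size s by rewrite -has_find.
split=> //; apply: (uniq_map_inj s_uniq); rewrite ?mem_nth //.
exact/eqP/(nth_find (0, false) y_has).
Qed.

Lemma good_step L t T n o : fresh_ids T n -> is_good_op o -> valid_req t T o ->
  (forall i, i < t -> ngood (T i) <= L) ->
  (forall i, i < t -> ngood (next_table T n o i) <= L) ->
  exists a, table_potential L t (next_table T n o) + a * a <= table_potential L t T
            /\ rb_cost T o <= L + a.
Proof.
move=> fT; case: o => [i|//|i x|//] _ /=.
- move=> it _ /(_ i it) ngood_next.
  have ngood_lt : ngood (T i) < L.
    by move: ngood_next; rewrite /upd eqxx -cats1 ngood_cat addn1.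
  have pot := potential_rcons_good (y := (n, true)) isT ngood_lt.
  have := table_potential_upd L T (rcons (T i) (n, true)) it.
  by exists (nbad (T i)); rewrite -ngood_nbad; split; lia.
- case/andP=> it xT /(_ i it) ngood_le _; case/andP: (fT i) => uT _.
  have [/= ks y_eq] := nth_pos_of_mem uT xT; rewrite ks.
  have y_good : (nth (0, false) (T i) (Defs.pos (T i) x)).2 by rewrite y_eq.
  have [a [pot cost]] := potential_move_to_front_good ks y_good ngood_le.
  have := table_potential_upd L T (move_to_front (T i) (Defs.pos (T i) x)) it.
  by exists a; split; lia.
Qed.

Lemma bad_step L t T n o : ~~ is_good_op o -> valid_req t T o ->
  (forall i, i < t -> ngood (T i) <= L) ->
  table_potential L t (next_table T n o) <= table_potential L t T + 4 * L * rb_cost T o.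
Proof.
case: o => [//|i|//|i x] _ /= it /(_ i it) ngood_le.
- have := potential_rcons_bad (y := (n, false)) isT ngood_le.
  have := table_potential_upd L T (rcons (T i) (n, false)) it; lia.
- case: ifP => ks; last lia.
  have := potential_move_to_front ks ngood_le.
  have := table_potential_upd L T (move_to_front (T i) (Defs.pos (T i) x)) it; lia.
Qed.

Lemma leq_bigmax_states (F : table -> nat) T n tr :
  F T <= \max_(T' <- states T n tr) F T'.
Proof. by case: tr => [|o tr]; rewrite /= big_cons leq_maxl. Qed.

Lemma amortized_exec L t tr T n : fresh_ids T n ->
  all (fun p : table * op => valid_req t p.1 p.2) (exec T n tr) ->
  (forall i, i < t -> \max_(T' <- states T n tr) ngood (T' i) <= L) ->
  exists xs : seq nat, [/\ size xs = count is_good_op tr,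
    \sum_(p <- exec T n tr | is_good_op p.2) rb_cost p.1 p.2 <= L * size xs + sumn xs &
    sumn [seq x * x | x <- xs] <=
      table_potential L t T +
      4 * L * \sum_(p <- exec T n tr | ~~ is_good_op p.2) rb_cost p.1 p.2].
Proof.
elim: tr T n => [|o tr IH] T n fT; first by exists [::]; rewrite !big_nil.
rewrite /= => /andP [o_valid tr_valid] ngood_max.
have ngood_le i : i < t -> ngood (T i) <= L /\
    \max_(T' <- states (next_table T n o) n.+1 tr) ngood (T' i) <= L.
  by move=> it; move: (ngood_max i it); rewrite big_cons geq_max => /andP [].
have [xs [size_xs good_xs bad_xs]] :=
  IH _ _ (fresh_ids_next o fT) tr_valid (fun i it => (ngood_le i it).2).
rewrite !big_cons /=; case o_good: (is_good_op o).
- have [|a [pot cost]] := good_step fT o_good o_valid (fun i it => (ngood_le i it).1).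
    by move=> i it; apply: leq_trans (ngood_le i it).2; apply: leq_bigmax_states.
  by exists (a :: xs); split; rewrite /= ?size_xs ?mulnS //; lia.
- have := bad_step n (negbT o_good) o_valid (fun i it => (ngood_le i it).1).
  by exists xs; split; rewrite //=; lia.
Qed.

Lemma sumn_sq_le (xs : seq nat) :
  sumn xs * sumn xs <= size xs * sumn [seq x * x | x <- xs].
Proof.
elim: xs => [|x xs IH] //=.
set S := sumn xs in IH *; set N := size xs in IH *; set S2 := sumn _ in IH *.
suff cross : 2 * (x * S) <= N * (x * x) + S2 by nia.
case: (posnP N) => [N0 | N_gt0].
  have S0 : S = 0 by move: IH; rewrite N0; nia.
  by rewrite S0 muln0.
have agm : 2 * (N * x * S) <= N * x * (N * x) + S * S.
  by rewrite !mulnn; apply: nat_Cauchy.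
by rewrite -(leq_pmul2l N_gt0); nia.
Qed.

Lemma count_is_good_op tr : count is_good_op tr = n_good_ins tr + n_good_qry tr.
Proof. by rewrite /n_good_ins /n_good_qry; elim: tr => [|o tr IH] //=; case: o => * /=; lia. Qed.

Lemma good_qry_latency_le_good_cost tr : good_qry_latency tr <= good_cost tr.
Proof.
rewrite /good_qry_latency /good_cost; elim: (exec _ _ _) => [|[T o] s IH].
  by rewrite !big_nil.
by rewrite !big_cons; case: o => * /=; lia.
Qed.

Lemma table_potential_empty L t : table_potential L t empty_table = 0.
Proof. by rewrite /table_potential big1 // => i _; rewrite /potential /nbad /= !muln0. Qed.

Lemma good_cost_amortized t tr : valid t tr ->
  let l := ell_M t tr in let N := n_good_ins tr + n_good_qry tr in
  exists S, good_cost tr <= l * N + S /\ S * S <= 4 * l * (N * adv_cost tr).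
Proof.
move=> tr_valid l N.
have ngood_le i : i < t -> \max_(T <- states empty_table 0 tr) ngood (T i) <= l.
  move=> it; pose F (j : 'I_t) := \max_(T <- states empty_table 0 tr) ngood (T j).
  exact: (leq_bigmax (F := F) (Ordinal it)).
have fresh0 : fresh_ids empty_table 0 by [].
have [xs [size_xs cost_xs sq_xs]] := amortized_exec fresh0 tr_valid ngood_le.
rewrite size_xs count_is_good_op -/N in cost_xs.
rewrite table_potential_empty -/(adv_cost tr) in sq_xs.
exists (sumn xs); split => //.
apply: leq_trans (sumn_sq_le xs) _; rewrite size_xs count_is_good_op -/N.
by apply: leq_trans (leq_mul (leqnn N) sq_xs) _; rewrite add0n; lia.
Qed.

Lemma le_mul_sqrt (x y z : R) : (0 <= x)%R -> (0 <= y)%R ->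
  (x * x <= y * y * z)%R -> (x <= y * sqrt z)%R.
Proof.
move=> x_ge0 y_ge0 sq_le.
have -> : (y * sqrt z)%R = sqrt (y * y * z) by rewrite sqrt_mult_alt ?sqrt_square //; nra.
by rewrite -[X in (X <= _)%R](sqrt_square x x_ge0); apply: sqrt_le_1_alt.
Qed.

Lemma INR_leq m n : m <= n -> (INR m <= INR n)%R.
Proof. by move/leP; apply: le_INR. Qed.

Lemma INR_addn m n : INR (m + n) = (INR m + INR n)%R.
Proof. exact: plus_INR. Qed.

Lemma INR_muln m n : INR (m * n) = (INR m * INR n)%R.
Proof. exact: mult_INR. Qed.

Theorem lemma7 :
  exists C : R, (0 < C)%R /\
  forall (t : nat) (tr : seq op), valid t tr ->
    (INR (good_cost tr) <= C * dc_bound t tr)%R /\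
    (INR (good_qry_latency tr) <= C * dc_bound t tr)%R.
Proof.
exists 2%R; split; first lra.
move=> t tr tr_valid.
suff cost_le : (INR (good_cost tr) <= 2 * dc_bound t tr)%R.
  by split=> //; apply: Rle_trans cost_le; apply/INR_leq/good_qry_latency_le_good_cost.
have [S [cost_le sq_le]] := good_cost_amortized tr_valid.
rewrite /dc_bound; move: cost_le sq_le.
set l := ell_M t tr; set N := n_good_ins tr + n_good_qry tr; set B := adv_cost tr.
clearbody l N B => cost_le sq_le.
have l_le_sq : l <= l * l by case: l {cost_le sq_le} => // l; nia.
have sq_le' : S * S <= (2 * l * l) * (2 * l * l) * (N * B).
  have l_le_pow4 : l <= l * l * (l * l) := leq_trans l_le_sq (leq_mul l_le_sq l_le_sq).
  by apply: leq_trans sq_le _; have := leq_mul (leq_mul (leqnn 4) l_le_pow4) (leqnn (N * B)); nia.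
have S_le : (INR S <= INR (2 * l * l) * sqrt (INR N * INR B))%R.
  by apply: le_mul_sqrt; rewrite -?INR_muln; [exact: pos_INR | exact: pos_INR | exact: INR_leq].
move: (INR_leq cost_le) (INR_leq l_le_sq) S_le; rewrite !(INR_addn, INR_muln) /=.
have := sqrt_pos (INR N * INR B); have := pos_INR l; have := pos_INR N; nra.
Qed.
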